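(* Let $\mathscr P\subseteq\mathbb N^p$ be a polymatroid and fix any lexicographic order $\prec$ on $\mathbb N^p$ (used to define $\mathrm{Stal}_{\mathscr P}$). Then \[\mathrm{Cave}_{\mathscr P}(\mathbf t)=\mathrm{Stal}_{\mathscr P}(\mathbf t)=\mathrm{Box}_{\mathscr P}(\mathbf t)=\text{M\''ob}_{\mathscr P}(\mathbf t).\]
   Context: Notation: $[p]=\{1,\dots,p\}$; $\mathbf e_i$ is the $i$th standard basis vector of $\mathbb Z^p$; for $J\subseteq[p]$, $\mathbf e_J=\sum_{j\in J}\mathbf e_j$ ($\mathbf e_\varnothing=\mathbf 0$); $|\mathbf n|=n_1+\dots+n_p$; $\mathbf a\le\mathbf b$ means $a_i\le b_i$ for all $i$ (componentwise order), and $\mathbf a<\mathbf b$ means $\mathbf a\le\mathbf b$, $\mathbf a\neq\mathbf b$; $\mathbf t^{\mathbf n}=t_1^{n_1}\cdots t_p^{n_p}$. Polymatroid: a finite set $\mathscr P\subseteq\mathbb N^p$ that is homogeneous (all $\mathbf u\in\mathscr P$ have the same value of $|\mathbf u|$; this common value is the rank $\mathrm{rk}(\mathscr P)$) and M-convex: for all $\mathbf u,\mathbf v\in\mathscr P$ and $i\in[p]$ with $u_i>v_i$ there is $j\in[p]$ with $u_j<v_j$ and $\mathbf u-\mathbf e_i+\mathbf e_j\in\mathscr P$. $I(\mathscr P)$ denotes the set of lattice points of the independence polytope of $\mathscr P$, i.e. $I(\mathscr P)=\{\mathbf n\in\mathbb N^p:\mathbf n\le\mathbf u\text{ for some }\mathbf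 u\in\mathscr P\}$. The indicator function is $\mathbb 1_{\mathscr P}(\mathbf n)=1$ if $\mathbf n\in\mathscr P$ and $0$ otherwise, for $\mathbf n\in\mathbb Z^p$. Cave polynomial: $\displaystyle\mathrm{Cave}_{\mathscr P}(\mathbf t)=\sum_{\mathbf n\in\mathbb N^p,\ |\mathbf n|=\mathrm{rk}(\mathscr P)}\mathbb 1_{\mathscr P}(\mathbf n)\prod_{i=1}^{p-1}\Big(1-\max_{j>i}\{\mathbb 1_{\mathscr P}(\mathbf n-\mathbf e_i+\mathbf e_j)\}\,t_i^{-1}\Big)\mathbf t^{\mathbf n}.$ Lexicographic orders: given a total ordering $\sigma_1,\dots,\sigma_p$ of $[p]$, $\mathbf u\prec\mathbf v$ iff $\mathbf u\ne\mathbf v$ and at the first index (in the order $\sigma_1,\sigma_2,\dots$) where they differ, $\mathbf u$ has the smaller entry. The standard lex order is the one with $\sigma_k=k$. Stalactites: for $\mathbf u\in\mathscr P$ and $V\subseteq\mathscr P$ let $L(\mathbf u;V)=\{\ell\in[p]:\mathbf u-\mathbf e_\ell+\mathbf e_j\in V\text{ for some }j\in[p]\}$ and $\mathrm{St}(\mathbf u;V)=\{\mathbf u-\mathbf e_J: J\subseteq L(\mathbf u;V)\}$. List $\mathscr P=\{\mathbf a_1\prec\dots\prec\mathbf a_r\}$ in the chosen lex order; the stalactites of $\mathscr P$ are the sets $\mathrm{St}(\mathbf a_k;\{\mathbf a_1,\dots,\mathbf a_{k-1}\})$, $k=1,\dots,r$. Let $c_{\mathbf n}(\mathscr P)=\#\{k:\mathbf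 n\in\mathrm{St}(\mathbf a_k;\{\mathbf a_1,\dots,\mathbf a_{k-1}\})\}$. Stalactite polynomial: $\mathrm{Stal}_{\mathscr P}(\mathbf t)=\sum_{\mathbf n\in I(\mathscr P)}(-1)^{\mathrm{rk}(\mathscr P)-|\mathbf n|}c_{\mathbf n}(\mathscr P)\mathbf t^{\mathbf n}$. Box polynomial: $\mathrm{Box}_{\mathscr P}(\mathbf t)=\sum_{\mathbf n\in I(\mathscr P)}\prod_{i=1}^p f_{n_i}(t_i)$, where $f_0(t)=1$ and $f_k(t)=t^k-t^{k-1}$ for $k\ge1$. M\''obius polynomial: let $P$ be the poset on $I(\mathscr P)\sqcup\{\hat 1\}$ ordered componentwise on $I(\mathscr P)$, with $\hat 1$ a new maximum element. Its M\''obius function is $\mu_P(\mathbf m,\mathbf m)=1$, $\mu_P(\mathbf m,\mathbf n)=-\sum_{\mathbf m\le\mathbf a<\mathbf n}\mu_P(\mathbf m,\mathbf a)$ for $\mathbf m<\mathbf n$, and $\mu_P(\mathbf m,\mathbf n)=0$ if $\mathbf m\not\le\mathbf n$. Set $\mu_{\mathscr P}(\mathbf n)=-\mu_P(\mathbf n,\hat 1)$ for $\mathbf n\in I(\mathscr P)$, and $\text{M\''ob}_{\mathscr P}(\mathbf t)=\sum_{\mathbf n\in I(\mathscr P)}\mu_{\mathscr P}(\mathbf n)\mathbf t^{\mathbf n}$. *)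

From HB Require Import structures.
From mathcomp Require Import all_boot all_order all_algebra all_fingroup.
From mathcomp Require Import finmap.

Set Implicit Arguments.
Unset Strict Implicit.
Unset Printing Implicit Defensive.
Import GRing.Theory Num.Theory.
Local Open Scope ring_scope.


(* Points of N^p and Z^p, indexed by 'I_p = {0,..,p-1} (0-based version of [p]). *)
Definition vec (p : nat) := {ffun 'I_p -> nat}.
Definition zvec (p : nat) := {ffun 'I_p -> int}.

(* ---------- Laurent polynomials with integer coefficients in t_1..t_p ----------
   A Laurent polynomial is represented as a formal finite sum of terms
   (coefficient, exponent vector in Z^p); two formal sums denote the same
   polynomial iff they have the same coefficient function [lcoef]. *)
Definition lpoly (p : nat) := seq (int * zvec p).

Definition lcoef p (A : lpoly p) (m : zvec p) : int :=
  \sum_(x <- A | x.2 == m) x.1.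

Definition zzero p : zvec p := [ffun=> 0].
Definition zadd p (a b : zvec p) : zvec p := [ffun k => a k + b k].

Definition lterm p (c : int) (m : zvec p) : lpoly p := [:: (c, m)].
Definition lone p : lpoly p := lterm 1 (zzero p).
Definition lmul p (A B : lpoly p) : lpoly p :=
  [seq (x.1 * y.1, zadd x.2 y.2) | x <- A, y <- B].
Definition lsum p (I : Type) (r : seq I) (F : I -> lpoly p) : lpoly p :=
  flatten (map F r).
Definition lprod p (I : Type) (r : seq I) (F : I -> lpoly p) : lpoly p :=
  foldr (fun i acc => lmul (F i) acc) (lone p) r.

Definition toZ p (n : vec p) : zvec p := [ffun k => (n k)%:Z].
Definition ev p (i : 'I_p) : zvec p := [ffun k => if k == i then 1 else 0].
Definition evJ p (J : {set 'I_p}) : zvec p := [ffun k => if k \in J then 1 else 0].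
Definition shift p (a : zvec p) (i j : 'I_p) : zvec p :=
  [ffun k => a k - ev i k + ev j k].
Definition vsize p (n : vec p) : nat := (\sum_(i < p) n i)%N.
Definition leqv p (a b : vec p) : bool := [forall k, (a k <= b k)%N].

(* Membership of a point of Z^p in a finite subset V of N^p
   (this is the indicator function 1_V on Z^p). *)
Definition inZ p (V : {fset vec p}) (m : zvec p) : bool :=
  [forall k, 0 <= m k] && ([ffun k => absz (m k)] \in V).
Definition ind p (V : {fset vec p}) (m : zvec p) : int := (inZ V m)%:R.

Definition homogeneous p (P : {fset vec p}) : Prop :=
  forall u v, u \in P -> v \in P -> vsize u = vsize v.
Definition Mconvex p (P : {fset vec p}) : Prop :=
  forall u v (i : 'I_p), u \in P -> v \in P -> (v i < u i)%N ->
    exists j : 'I_p, (u j < v j)%N /\ inZ P (shift (toZ u) i j).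
Definition polymatroid p (P : {fset vec p}) : Prop :=
  homogeneous P /\ Mconvex P.

(* rank: the common value of |u| (0 for the empty set, where it is irrelevant) *)
Definition rk p (P : {fset vec p}) : nat :=
  vsize (head [ffun=> 0%N] (enum_fset P)).

(* all points n of N^p with n_i <= rk P for all i (a finite box containing
   I(P) and every n with |n| = rk P) *)
Definition box p (P : {fset vec p}) : seq (vec p) :=
  [seq [ffun k => nat_of_ord (f k)] | f : {ffun 'I_p -> 'I_(rk P).+1}].

Definition inI p (P : {fset vec p}) (n : vec p) : bool :=
  has (fun u => leqv n u) (enum_fset P).
Definition IP p (P : {fset vec p}) : seq (vec p) := [seq n <- box P | inI P n].

(* max_{j>i} 1_P(n - e_i + e_j) *)
Definition cmax p (P : {fset vec p}) (n : vec p) (i : 'I_p) : int :=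
  (([exists j : 'I_p, (i < j)%N && inZ P (shift (toZ n) i j)]) : bool)%:R.

Definition Cave p (P : {fset vec p}) : lpoly p :=
  lsum [seq n <- box P | vsize n == rk P]
    (fun n => lmul (lterm (ind P (toZ n)) (zzero p))
      (lmul (lprod [seq i : 'I_p <- enum 'I_p | (i.+1 < p)%N]
               (fun i => [:: (1, zzero p); (- cmax P n i, [ffun k => - ev i k])]))
            (lterm 1 (toZ n)))).

(* lexicographic order w.r.t. the total ordering s(0), s(1), ..., s(p-1) of 'I_p *)
Definition lexlt p (s : {perm 'I_p}) (u v : vec p) : bool :=
  [exists k : 'I_p, [forall l : 'I_p, (l < k)%N ==> (u (s l) == v (s l))]
                      && (u (s k) < v (s k))%N].

(* the predecessors {a_1,...,a_{k-1}} of u = a_k in P *)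
Definition preds p (s : {perm 'I_p}) (P : {fset vec p}) (u : vec p) : {fset vec p} :=
  [fset v in P | lexlt s v u]%fset.

Definition Lset p (u : vec p) (V : {fset vec p}) : {set 'I_p} :=
  [set l : 'I_p | [exists j : 'I_p, inZ V (shift (toZ u) l j)]].

Definition inSt p (u : vec p) (V : {fset vec p}) (m : zvec p) : bool :=
  [exists J : {set 'I_p}, (J \subset Lset u V) &&
     (m == [ffun k => toZ u k - evJ J k])].

Definition cstal p (s : {perm 'I_p}) (P : {fset vec p}) (n : vec p) : nat :=
  count (fun u => inSt u (preds s P u) (toZ n)) (enum_fset P).

Definition Stal p (s : {perm 'I_p}) (P : {fset vec p}) : lpoly p :=
  lsum (IP P) (fun n =>
    lterm ((-1) ^+ (rk P - vsize n) * (cstal s P n)%:R) (toZ n)).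

Definition kev p (k : nat) (i : 'I_p) : zvec p :=
  [ffun l => if l == i then k%:Z else 0].
Definition fpoly p (i : 'I_p) (k : nat) : lpoly p :=
  if k is k'.+1 then [:: (1, kev k i); (-1, kev k' i)] else lone p.

Definition Box p (P : {fset vec p}) : lpoly p :=
  lsum (IP P) (fun n => lprod (enum 'I_p) (fun i => fpoly i (n i))).

(* The poset I(P) ⊔ {1^}: Some n for n in I(P), None for 1^. *)
Definition pleq p (x y : option (vec p)) : bool :=
  match x, y with
  | _, None => true
  | None, Some _ => false
  | Some a, Some b => leqv a b
  end.

Definition pelems p (P : {fset vec p}) : seq (option (vec p)) :=
  rcons [seq Some n | n <- IP P] None.

(* Moebius function by the defining recursion; the fuel (the size of the poset)
   exceeds the length of every chain, so it never runs out on comparable pairs. *)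
Fixpoint mu_fuel p (P : {fset vec p}) (fuel : nat) (x y : option (vec p)) : int :=
  if fuel is f.+1 then
    if x == y then 1
    else if pleq x y then
      - \sum_(z <- pelems P | pleq x z && pleq z y && (z != y)) mu_fuel P f x z
    else 0
  else 0.

Definition muP p (P : {fset vec p}) (x y : option (vec p)) : int :=
  mu_fuel P (size (pelems P)) x y.

Definition muvec p (P : {fset vec p}) (n : vec p) : int := - muP P (Some n) None.

Definition Mob p (P : {fset vec p}) : lpoly p :=
  lsum (IP P) (fun n => lterm (muvec P n) (toZ n)).

(* In each of the four polynomials the coefficient of t^m is the sum over
   n in I(P) of prod_i [t_i^(m_i)] f_(n_i)(t_i); for Box this is the definition.
   Since I(P) is a down-set of N^p, every interval [x, z] of the poset is a
   product of chains, so mu(x, z) is that product of coefficients of the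
   f_(z_i), and -mu(n, 1^) = sum_(z >= n) mu(n, z) gives the Moebius case.
   The k-th stalactite contributes the coefficient of t^m in
   t^(a_k) prod_(l in L) (1 - t_l^-1), with L = L(a_k; {a_1, ..., a_(k-1)}).
   By M-convexity, the points of I({a_1, ..., a_k}) missing from
   I({a_1, ..., a_(k-1)}) are exactly the n <= a_k that agree with a_k on L,
   and the box coefficients of these points add up to that same product; so
   the stalactite sum telescopes to the sum over I(P). Finally, for the
   standard lexicographic order, l is in L(u; predecessors of u) iff
   u - e_l + e_j is in P for some j > l, which makes the Cave polynomial the
   stalactite polynomial of that order. *)

From HB Require Import structures.
From mathcomp Require Import all_boot all_order all_algebra all_fingroup.
From mathcomp Require Import finmap.
From mathcomp Require Import zify ring.

Set Implicit Arguments.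
Unset Strict Implicit.
Unset Printing Implicit Defensive.
Import Order.POrderTheory GRing.Theory.
Local Open Scope ring_scope.

Lemma prodr_bool (R : comPzSemiRingType) (I : finType) (b : pred I) :
  \prod_(i : I) ((b i)%:R : R) = ([forall i, b i])%:R.
Proof.
have [/forallP bT|/forallPn [i bNi]] := boolP [forall i, b i].
  by rewrite big1 // => i _; rewrite bT.
by rewrite (bigD1 i) //= (negbTE bNi) mul0r.
Qed.

Lemma sumr_pred1_seq (R : pzSemiRingType) (T : eqType) (s : seq T) x (F : T -> R) :
  uniq s -> \sum_(y <- s) (y == x)%:R * F y = (x \in s)%:R * F x.
Proof.
move=> s_uniq; rewrite (eq_bigr (fun y => if y == x then F y else 0)); last first.
  by move=> y _; case: eqP; rewrite ?mul1r ?mul0r.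
rewrite -big_mkcond /=; have [xs|xNs] := boolP (x \in s).
  by rewrite -big_filter (filter_pred1_uniq s_uniq xs) big_seq1 mul1r.
rewrite mul0r big_seq_cond big1 // => y /andP [ys /eqP yx].
by rewrite -yx ys in xNs.
Qed.

Lemma natr_count (R : pzSemiRingType) (T : Type) (a : pred T) (r : seq T) :
  (count a r)%:R = \sum_(x <- r) (a x)%:R :> R.
Proof. by rewrite -sum1_count natr_sum big_mkcond; apply: eq_bigr => x _; case: (a x). Qed.

Lemma sub_count_ltn (T : eqType) (a b : pred T) s x :
  subpred a b -> x \in s -> b x -> ~~ a x -> (count a s < count b s)%N.
Proof.
move=> ab; elim: s => [//|y s IHs] /=; rewrite inE => /orP [/eqP <-|xs] bx aNx.
  by rewrite bx (negbTE aNx) add1n ltnS sub_count.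
have := IHs xs bx aNx; case ay: (a y); first by rewrite (ab y ay) ltn_add2l.
by rewrite add0n => /leq_trans; apply; rewrite leq_addl.
Qed.

Section LaurentCoefficients.
Variable p : nat.
Implicit Types (A B : lpoly p) (a m : zvec p).

Definition zkev (c : int) (i : 'I_p) : zvec p := [ffun l => if l == i then c else 0].

Lemma zkev_inj i : injective (zkev^~ i).
Proof. by move=> a c /ffunP /(_ i); rewrite !ffunE eqxx. Qed.

Lemma zzeroE : zzero p = 0.
Proof. by []. Qed.

Lemma zkevN1 i : [ffun k => - ev i k] = zkev (-1) i.
Proof. by apply/ffunP => k; rewrite !ffunE; case: eqP. Qed.

Lemma zkev0 i : zkev 0 i = 0.
Proof. by apply/ffunP => l; rewrite !ffunE; case: eqP. Qed.

Lemma lcoef_nil m : lcoef [::] m = 0.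
Proof. by rewrite /lcoef big_nil. Qed.

Lemma lcoef_cons x A m : lcoef (x :: A) m = (x.2 == m)%:R * x.1 + lcoef A m.
Proof. by rewrite /lcoef big_cons; case: eqP; rewrite ?mul1r ?mul0r ?add0r. Qed.

Lemma lcoef_cat A B m : lcoef (A ++ B) m = lcoef A m + lcoef B m.
Proof. by rewrite /lcoef big_cat. Qed.

Lemma lcoef_lsum (I : Type) (r : seq I) (F : I -> lpoly p) m :
  lcoef (lsum r F) m = \sum_(i <- r) lcoef (F i) m.
Proof.
elim: r => [|i r IHr]; first by rewrite big_nil lcoef_nil.
by rewrite big_cons -IHr /lsum /= lcoef_cat.
Qed.

Lemma lcoef_lterm c a m : lcoef (lterm c a) m = (a == m)%:R * c.
Proof. by rewrite lcoef_cons lcoef_nil addr0. Qed.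

Lemma lcoef_lone m : lcoef (lone p) m = (m == 0)%:R.
Proof. by rewrite lcoef_lterm mulr1 eq_sym. Qed.

Lemma lcoef_lmul A B m :
  lcoef (lmul A B) m = \sum_(x <- A) x.1 * lcoef B (m - x.2).
Proof.
elim: A => [|x A IHA]; first by rewrite big_nil lcoef_nil.
rewrite big_cons -IHA /lmul /= lcoef_cat; congr (_ + _).
rewrite /lcoef big_map big_distrr; apply: eq_bigl => y /=.
by rewrite [RHS]eq_sym subr_eq addrC.
Qed.

Lemma lcoef_lmul_lterml c a A m :
  lcoef (lmul (lterm c a) A) m = c * lcoef A (m - a).
Proof. by rewrite lcoef_lmul big_seq1. Qed.

Lemma lcoef_lmul_ltermr c a A m :
  lcoef (lmul A (lterm c a)) m = c * lcoef A (m - a).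
Proof.
rewrite lcoef_lmul /lcoef (big_mkcond (fun x => x.2 == _)) big_distrr.
apply: eq_bigr => x _ /=; rewrite big_cons big_nil /=.
have -> : (a == m - x.2) = (x.2 == m - a).
  by rewrite eq_sym subr_eq addrC -subr_eq.
by case: eqP; rewrite ?addr0 ?mulr0 // mulrC.
Qed.

Definition in_var (i : 'I_p) A := forall x, x \in A -> forall k, k != i -> x.2 k = 0.

Lemma in_var_eq_zkev i A x c :
  in_var i A -> x \in A -> (x.2 == zkev c i) = (x.2 i == c).
Proof.
move=> Ai xA; apply/eqP/eqP => [->|xi]; first by rewrite ffunE eqxx.
by apply/ffunP => k; rewrite ffunE; case: eqP => [->//|/eqP]; apply: Ai.
Qed.

Lemma lcoef_lprod (r : seq 'I_p) (F : 'I_p -> lpoly p) m :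
  uniq r -> (forall i, in_var i (F i)) ->
  lcoef (lprod r F) m =
  \prod_i (if i \in r then lcoef (F i) (zkev (m i) i) else (m i == 0)%:R).
Proof.
move=> + Fvar; elim: r m => [|i r IHr] m /= => [_|/andP [iNr r_uniq]].
  rewrite lcoef_lone prodr_bool; congr ((_ : bool)%:R).
  apply/eqP/forallP => [-> k|m0]; first by rewrite ffunE.
  by apply/ffunP => k; rewrite ffunE; apply/eqP.
rewrite lcoef_lmul big_seq.
pose rest := \prod_(k | k != i)
  (if k \in r then lcoef (F k) (zkev (m k) k) else (m k == 0)%:R).
rewrite (eq_bigr (fun x : int * zvec p => x.1 * (x.2 i == m i)%:R * rest)); last first.
  move=> x xF; rewrite IHr // (bigD1 i) //= (negbTE iNr) mulrA !ffunE.
  rewrite subr_eq0 [m i == _]eq_sym; congr (_ * _ * _); apply: eq_bigr => k ki.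
  by rewrite !ffunE (Fvar i x xF k ki) subr0.
rewrite -big_seq -big_distrl /= [RHS](bigD1 i) //= mem_head.
congr (_ * _); last by apply: eq_bigr => k ki; rewrite in_cons (negbTE ki).
rewrite /lcoef [RHS]big_mkcond big_seq [RHS]big_seq; apply: eq_bigr => x xF.
by rewrite (in_var_eq_zkev (m i) (Fvar i) xF); case: eqP; rewrite ?mulr1 ?mulr0.
Qed.

End LaurentCoefficients.

Section Vectors.
Variable p : nat.
Implicit Types (m : zvec p) (n u v w : vec p).

Definition absv m : vec p := [ffun k => absz (m k)].
Definition nonneg m := [forall k, 0 <= m k].

Lemma toZK : cancel (@toZ p) absv.
Proof. by move=> n; apply/ffunP => k; rewrite !ffunE. Qed.

Lemma toZ_inj : injective (@toZ p).
Proof. exact: can_inj toZK. Qed.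

Lemma nonneg_toZ n : nonneg (toZ n).
Proof. by apply/forallP => k; rewrite ffunE. Qed.

Lemma absvK m : nonneg m -> toZ (absv m) = m.
Proof. by move/forallP => m_ge0; apply/ffunP => k; rewrite !ffunE gez0_abs. Qed.

Lemma inZ_toZ (V : {fset vec p}) n : inZ V (toZ n) = (n \in V).
Proof. by rewrite /inZ -/(nonneg _) nonneg_toZ -/(absv _) toZK. Qed.

Lemma leq_vsize n k : (n k <= vsize n)%N.
Proof. by rewrite /vsize (bigD1 k) //= leq_addr. Qed.

Lemma leqvP n w : reflect (forall k, n k <= w k)%N (leqv n w).
Proof. exact: forallP. Qed.

Lemma leqvv n : leqv n n.
Proof. by apply/leqvP. Qed.

Lemma leqv_trans v n w : leqv n v -> leqv v w -> leqv n w.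
Proof. by move=> /leqvP nv /leqvP vw; apply/leqvP => k; apply: leq_trans (nv k) (vw k). Qed.

Lemma leqv_anti n w : leqv n w -> leqv w n -> n = w.
Proof.
by move=> /leqvP nw /leqvP wn; apply/ffunP => k; apply/eqP; rewrite eqn_leq nw wn.
Qed.

Lemma inIP (Q : {fset vec p}) n : reflect (exists2 u, u \in Q & leqv n u) (inI Q n).
Proof. exact: hasP. Qed.

Lemma inI_leqv (Q : {fset vec p}) n w : leqv n w -> inI Q w -> inI Q n.
Proof. by move=> nw /inIP [u uQ wu]; apply/inIP; exists u => //; apply: leqv_trans wu. Qed.

Lemma inI_fsetD1 (Q : {fset vec p}) u n :
  u \in Q -> inI Q n = inI (Q `\ u)%fset n || leqv n u.
Proof.
move=> uQ; apply/inIP/orP => [[v vQ nv]|[/inIP [v]|nu]]; last by exists u.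
  by have [<-|vu] := eqVneq v u; [right | left; apply/inIP; exists v; rewrite ?inE ?vu].
by rewrite inE => /andP [_ vQ] nv; exists v.
Qed.

Lemma sum_box_prod (P : {fset vec p}) (h : 'I_p -> nat -> int) :
  \sum_(n <- box P) \prod_i h i (n i) = \prod_i \sum_(k < (rk P).+1) h i k.
Proof.
rewrite big_image /= bigA_distr_bigA /=.
by apply: eq_bigr => f _; apply: eq_bigr => i _; rewrite ffunE.
Qed.

Lemma uniq_box (P : {fset vec p}) : uniq (box P).
Proof.
rewrite map_inj_uniq ?enum_uniq // => f g /ffunP fg.
by apply/ffunP => k; apply: val_inj; have := fg k; rewrite !ffunE.
Qed.

Lemma mem_box (P : {fset vec p}) n : (n \in box P) = [forall k, (n k <= rk P)%N].
Proof.
apply/imageP/forallP => [[f _ ->] k|n_le]; first by rewrite ffunE -ltnS ltn_ord.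
exists [ffun k => inord (n k) : 'I_(rk P).+1] => //.
by apply/ffunP => k; rewrite !ffunE inordK // ltnS.
Qed.

Lemma uniq_IP (P : {fset vec p}) : uniq (IP P).
Proof. by rewrite filter_uniq // uniq_box. Qed.

Variable P : {fset vec p}.
Hypothesis P_homog : homogeneous P.

Lemma rk_vsize u : u \in P -> rk P = vsize u.
Proof.
move=> uP; apply: P_homog => //; rewrite /rk.
have : u \in enum_fset P by [].
by case E: (enum_fset P) => [//|a s] _ /=; have : a \in enum_fset P by rewrite E mem_head.
Qed.

Lemma leq_rk u k : u \in P -> (u k <= rk P)%N.
Proof. by move=> uP; rewrite (rk_vsize uP) leq_vsize. Qed.

Lemma mem_IP n : (n \in IP P) = inI P n.
Proof.
rewrite mem_filter andb_idr // => /inIP [u uP /leqvP nu].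
by rewrite mem_box; apply/forallP => k; apply: leq_trans (nu k) (leq_rk k uP).
Qed.

End Vectors.

(* [fcoef k c] is the coefficient of t^c in f_k(t), and [boxcoef n m] that of
   t^m in prod_i f_(n_i)(t_i). *)
Definition fcoef (k : nat) (c : int) : int :=
  (c == k%:Z)%:R - ((0 < k)%N && (c == k.-1%:Z))%:R.

Definition boxcoef p (n : vec p) (m : zvec p) : int := \prod_i fcoef (n i) (m i).

Lemma fcoef_diag k : fcoef k k%:Z = 1.
Proof.
rewrite /fcoef eqxx; case: k => [|k] /=; first by rewrite subr0.
by have -> : (k.+1%:Z == k%:Z) = false by apply/negbTE; lia.
Qed.

Lemma fcoef_neq0 k c : fcoef k c != 0 -> (0 <= c) && (c <= k%:Z).
Proof.
rewrite /fcoef; case: (c =P k%:Z) => [->|_]; first by rewrite lexx andbT.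
by case: k => [|k] //=; case: (c =P k%:Z) => [->|] //= _; rewrite lez_nat.
Qed.

Lemma sum_fcoef n c : \sum_(k < n.+1) fcoef k c = (c == n%:Z)%:R.
Proof.
elim: n => [|n IHn]; first by rewrite big_ord1 /fcoef subr0.
by rewrite big_ord_recr /= IHn /fcoef /=; ring.
Qed.

Lemma sum_fcoef_leq u N c : (u < N)%N ->
  \sum_(k < N) (k <= u)%N%:R * fcoef k c = (c == u%:Z)%:R.
Proof.
move=> uN; rewrite -sum_fcoef (big_ord_widen N (fcoef^~ c)) // [RHS]big_mkcond.
by apply: eq_bigr => k _; rewrite ltnS; case: (k <= u)%N; rewrite ?mul1r ?mul0r.
Qed.

Section BoxCoefficients.
Variable p : nat.
Implicit Types (m : zvec p) (n w x : vec p).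

Lemma boxcoef_neq0 w m : boxcoef w m != 0 -> nonneg m && leqv (absv m) w.
Proof.
move=> wm0; have mk k : (0 <= m k) && (m k <= (w k)%:Z).
  apply: fcoef_neq0; apply: contra wm0 => /eqP wmk0.
  by apply/prodf_eq0; exists k => //; rewrite wmk0.
apply/andP; split; first by apply/forallP => k; case/andP: (mk k).
by apply/leqvP => k; rewrite ffunE; case/andP: (mk k); case: (m k) => // a _; rewrite lez_nat.
Qed.

Lemma boxcoef_eq0 w x : ~~ leqv x w -> boxcoef w (toZ x) = 0.
Proof. by apply: contraNeq => /boxcoef_neq0; rewrite toZK => /andP []. Qed.

Lemma boxcoef_diag x : boxcoef x (toZ x) = 1.
Proof. by rewrite /boxcoef big1 // => i _; rewrite ffunE fcoef_diag. Qed.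

Lemma lcoef_fpoly (i : 'I_p) k c : lcoef (fpoly i k) (zkev c i) = fcoef k c.
Proof.
case: k => [|k]; first by rewrite lcoef_lone -(zkev0 i) (inj_eq (@zkev_inj _ i)) /fcoef subr0.
rewrite !lcoef_cons lcoef_nil /fcoef /= !(inj_eq (@zkev_inj _ i)) addr0 mulr1 mulrN1.
by rewrite ![_ == c]eq_sym.
Qed.

Lemma fpoly_in_var (i : 'I_p) k : in_var i (fpoly i k).
Proof.
case: k => [|k] x /=; rewrite !inE; first by move=> /eqP -> l _; rewrite ffunE.
by move=> /orP [] /eqP -> l /negbTE li; rewrite ffunE li.
Qed.

Lemma lcoef_Box (P : {fset vec p}) m : lcoef (Box P) m = \sum_(n <- IP P) boxcoef n m.
Proof.
rewrite lcoef_lsum; apply: eq_bigr => n _.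
rewrite lcoef_lprod ?enum_uniq //; last by move=> i; apply: fpoly_in_var.
by apply: eq_bigr => i _; rewrite mem_enum lcoef_fpoly.
Qed.

End BoxCoefficients.

Section Moebius.
Variables (p : nat) (P : {fset vec p}).
Hypothesis P_homog : homogeneous P.
Implicit Types (m : zvec p) (n w x z : vec p).

Lemma sum_boxcoef_leqv x z : z \in IP P ->
  \sum_(w <- IP P | leqv w z) boxcoef w (toZ x) = (x == z)%:R.
Proof.
move=> zI; have z_le i : (z i < (rk P).+1)%N.
  by move: zI; rewrite mem_filter mem_box ltnS => /andP [_ /forallP].
rewrite big_filter_cond (eq_bigl (fun w : vec p => leqv w z)) => [|w]; last first.
  by apply/andb_idl => wz; apply: inI_leqv wz _; rewrite -mem_IP.
rewrite big_mkcond /= (eq_bigr (fun w : vec p =>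
  \prod_i ((w i <= z i)%N%:R * fcoef (w i) (toZ x i)))); last first.
  move=> w _; rewrite big_split /= prodr_bool -/(leqv w z).
  by case: leqv; rewrite ?mul1r ?mul0r.
rewrite (sum_box_prod P (fun i k => (k <= z i)%N%:R * fcoef k (toZ x i))).
rewrite (eq_bigr (fun i => (x i == z i)%:R)); last first.
  by move=> i _; rewrite sum_fcoef_leq // ffunE eqz_nat.
rewrite prodr_bool; congr ((_ : bool)%:R).
by apply/forallP/eqP => [xz|-> //]; apply/ffunP => i; apply/eqP.
Qed.

Lemma mu_fuel_boxcoef f x z : z \in IP P ->
  (count (fun w => leqv w z) (IP P) <= f)%N ->
  mu_fuel P f (Some x) (Some z) = boxcoef z (toZ x).
Proof.
elim: f x z => [|f IHf] x z zI zf.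
  suff: has (fun w => leqv w z) (IP P) by rewrite has_count; case: (count _ _) zf.
  by apply/hasP; exists z; rewrite ?leqvv.
rewrite /=; have [<-|xz] := eqVneq x z; first by rewrite eqxx boxcoef_diag.
rewrite (inj_eq (@Some_inj _)) (negbTE xz).
case: (boolP (leqv x z)) => [_|xNz] /=; last by rewrite boxcoef_eq0.
have := sum_boxcoef_leqv x zI.
rewrite (negbTE xz) big_mkcond (bigD1_seq z) ?uniq_IP //= leqvv.
move/eqP; rewrite addr_eq0 => /eqP ->; congr (- _).
rewrite /pelems -cats1 big_cat /= big_map big_cons big_nil /= !addr0.
rewrite big_mkcond [RHS]big_mkcond; apply: eq_big_seq => w wI /=.
rewrite (inj_eq (@Some_inj _)); case: (eqVneq w z) => [_|wNz]; rewrite ?andbF //=.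
have [wz|] := boolP (leqv w z); rewrite ?andbF ?andbT //=.
have [xw|xNw] := boolP (leqv x w); last by rewrite boxcoef_eq0.
apply: IHf => //; rewrite -ltnS; apply: leq_trans zf; apply: (@sub_count_ltn _ _ _ _ z) => //.
- by move=> y /= yw; apply: leqv_trans yw wz.
- by rewrite /= leqvv.
- by apply: contra wNz => /= zw; rewrite (leqv_anti wz zw).
Qed.

Lemma muvec_boxcoef n : n \in IP P -> muvec P n = \sum_(w <- IP P) boxcoef w (toZ n).
Proof.
move=> nI; rewrite /muvec /muP size_rcons size_map /= opprK.
rewrite /pelems -cats1 big_cat /= big_map big_cons big_nil /= !addr0.
rewrite big_mkcond; apply: eq_big_seq => w wI /=; rewrite andbT.
have [nw|nNw] := boolP (leqv n w); last by rewrite boxcoef_eq0.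
by apply: mu_fuel_boxcoef => //; apply: count_size.
Qed.

Lemma lcoef_Mob m : lcoef (Mob P) m = \sum_(w <- IP P) boxcoef w m.
Proof.
rewrite lcoef_lsum; under eq_bigr do rewrite lcoef_lterm.
have [/andP [m_ge0 mI]|mNI] := boolP (nonneg m && (absv m \in IP P)).
  rewrite -(absvK m_ge0); under eq_bigr do rewrite (inj_eq (@toZ_inj p)).
  by rewrite sumr_pred1_seq ?uniq_IP // mI mul1r muvec_boxcoef.
rewrite big1_seq => [|n nI]; last first.
  by case: eqP => [nm|]; rewrite ?mul0r //; move: mNI; rewrite -nm nonneg_toZ toZK nI.
rewrite big1_seq // => w wI; apply/eqP; apply: contraR mNI.
by case/boxcoef_neq0/andP => -> mw; rewrite mem_IP // (inI_leqv mw) // -mem_IP.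
Qed.

End Moebius.

Section LexOrder.
Variables (p : nat) (s : {perm 'I_p}).
Implicit Types (u v w : vec p).

Lemma lexlt_irr u : ~~ lexlt s u u.
Proof. by apply/existsP => -[k /andP [_]]; rewrite ltnn. Qed.

Lemma lexlt_trans v u w : lexlt s u v -> lexlt s v w -> lexlt s u w.
Proof.
move=> /existsP [k1 /andP [/forallP uv lt1]] /existsP [k2 /andP [/forallP vw lt2]].
have eq_uv (l : 'I_p) : (l < k1)%N -> u (s l) = v (s l) by move/(implyP (uv l))/eqP.
have eq_vw (l : 'I_p) : (l < k2)%N -> v (s l) = w (s l) by move/(implyP (vw l))/eqP.
have eq_uw (l : 'I_p) : (l < k1)%N -> (l < k2)%N -> u (s l) == w (s l).
  by move=> lk1 lk2; rewrite eq_uv ?eq_vw.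
apply/existsP; case: (ltngtP k1 k2) => [k12|k21|/val_inj k12].
- exists k1; rewrite -eq_vw // lt1 andbT; apply/forallP => l; apply/implyP => lk.
  by rewrite eq_uw // (ltn_trans lk k12).
- exists k2; rewrite eq_uv // lt2 andbT; apply/forallP => l; apply/implyP => lk.
  by rewrite eq_uw // (ltn_trans lk k21).
- subst k2; exists k1; rewrite (ltn_trans lt1 lt2) andbT.
  by apply/forallP => l; apply/implyP => lk; rewrite eq_uw.
Qed.

Lemma lexlt_total u v : u != v -> lexlt s u v || lexlt s v u.
Proof.
move=> uv; have [i uvi] : exists i, u (s i) != v (s i).
  apply/existsP; apply: contraR uv => /existsPn uv; apply/eqP/ffunP => i.
  by have := uv ((s^-1)%g i); rewrite permKV negbK => /eqP.
case: (@arg_minnP _ _ (fun k : 'I_p => u (s k) != v (s k)) val uvi) => k uvk k_min.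
have uv_eq : [forall l : 'I_p, (l < k)%N ==> (u (s l) == v (s l))].
  apply/forallP => l; apply/implyP; apply: contraTT; rewrite -leqNgt; exact: k_min.
case: ltngtP uvk => // uvk _; apply/orP; [left | right]; apply/existsP; exists k.
  by rewrite uv_eq uvk.
rewrite uvk andbT; apply/forallP => l; rewrite eq_sym.
exact: (forallP uv_eq l).
Qed.

Lemma lexlt_max (r : seq (vec p)) : r != [::] ->
  exists2 u, u \in r & forall v, v \in r -> ~~ lexlt s u v.
Proof.
elim: r => [//|x [|y r] IHr] _.
  by exists x; rewrite ?mem_head // => v; rewrite inE => /eqP ->; apply: lexlt_irr.
have [//|u ur u_max] := IHr.
have [ux|uNx] := boolP (lexlt s u x).
  exists x; first exact: mem_head.
  move=> v; rewrite inE => /orP [/eqP ->|vr]; first exact: lexlt_irr.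
  by apply: contra (u_max v vr) => /(lexlt_trans ux).
exists u; first by rewrite inE ur orbT.
by move=> v; rewrite inE => /orP [/eqP ->|]; last exact: u_max.
Qed.

End LexOrder.

Section Exchange.
Variables (p : nat) (s : {perm 'I_p}) (P : {fset vec p}).
Implicit Types (u v n : vec p) (V : {fset vec p}).

Definition shiftn u (i j : 'I_p) : vec p := [ffun k => (u k + (k == j) - (k == i))%N].

Lemma shiftnn u i : shiftn u i i = u.
Proof. by apply/ffunP => k; rewrite ffunE addnK. Qed.

Lemma shift_toZ u i j : (i == j) || (0 < u i)%N -> shift (toZ u) i j = toZ (shiftn u i j).
Proof.
move=> ij_u; apply/ffunP => k; rewrite !ffunE.
case: (eqVneq k i) => [ki|_]; case: (eqVneq k j) => [kj|kNj] /=.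
- by rewrite addnK; ring.
- move: ij_u; rewrite -ki (negbTE kNj) /= => uk_gt0.
  by rewrite addn0 subn1 subr0 predn_int.
- by rewrite subn0 subr0 addn1; lia.
- by rewrite subn0 subr0 addr0 addn0.
Qed.

Lemma inZ_shift V u i j :
  inZ V (shift (toZ u) i j) = ((i == j) || (0 < u i)%N) && (shiftn u i j \in V).
Proof.
case: (boolP ((i == j) || (0 < u i)%N)) => [ij_u|/norP [ij]].
  by rewrite shift_toZ // inZ_toZ.
rewrite -leqNgt leqn0 => /eqP ui0; apply/negbTE/nandP; left; apply/forallPn.
by exists i; rewrite !ffunE eqxx (negbTE ij) ui0.
Qed.

Lemma mem_preds u v : (v \in preds s P u) = (v \in P) && lexlt s v u.
Proof. by rewrite !inE. Qed.

Lemma Lset_preds_gt0 u l : l \in Lset u (preds s P u) -> (0 < u l)%N.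
Proof.
rewrite inE => /existsP [j]; rewrite inZ_shift => /andP [/orP [/eqP lj|//]].
by rewrite -lj shiftnn mem_preds (negbTE (lexlt_irr s u)) andbF.
Qed.

Lemma lexlt_shiftn u k j : (0 < u (s k))%N -> s k != j ->
  (forall l : 'I_p, (l < k)%N -> s l != j) -> lexlt s (shiftn u (s k) j) u.
Proof.
move=> uk_gt0 kj lj; apply/existsP; exists k; apply/andP; split.
  apply/forallP => l; apply/implyP => lk; rewrite ffunE (negbTE (lj l lk)).
  by rewrite (inj_eq perm_inj) (ltn_eqF lk : (l == k) = false) addn0 subn0.
by rewrite ffunE eqxx (negbTE kj) addn0 subn1 ltn_predL.
Qed.

Lemma leqv_shiftn n u l j : leqv n u -> (n l < u l)%N -> leqv n (shiftn u l j).
Proof.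
move=> /leqvP nu nlu; apply/leqvP => k; rewrite ffunE.
case: (eqVneq k l) => [->|_] /=; first by case: (l == j) => /=; lia.
by rewrite subn0 (leq_trans (nu k)) ?leq_addr.
Qed.

Hypothesis P_mconv : Mconvex P.

Lemma inI_preds u n : u \in P -> leqv n u ->
  inI (preds s P u) n = [exists l, (l \in Lset u (preds s P u)) && (n l < u l)%N].
Proof.
move=> uP nu; apply/inIP/existsP => [[v]|[l /andP [lL nlu]]]; last first.
  move: lL; rewrite inE => /existsP [j].
  by rewrite inZ_shift => /andP [_ shP]; exists (shiftn u l j); last apply: leqv_shiftn.
rewrite mem_preds => /andP [vP /existsP [k /andP [/forallP vu_eq vu]]] nv.
have [j [uj shP]] := P_mconv uP vP vu.
have uk_gt0 : (0 < u (s k))%N by apply: leq_ltn_trans vu.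
have kj : s k != j by apply: contraTneq uj => <-; rewrite -leqNgt ltnW.
have lj (l : 'I_p) : (l < k)%N -> s l != j.
  by move=> lk; apply: contraTneq uj => <-; rewrite (eqP (implyP (vu_eq l) lk)) ltnn.
exists (s k); rewrite (leq_ltn_trans (leqvP _ _ nv (s k)) vu) andbT inE.
apply/existsP; exists j; move: shP; rewrite !inZ_shift uk_gt0 orbT /= mem_preds => ->.
exact: lexlt_shiftn.
Qed.

End Exchange.

(* The coefficient of t^m in t^u prod_(l in L) (1 - t_l^-1). *)
Definition stalcoef p (u : vec p) (L : {set 'I_p}) (m : zvec p) : int :=
  \prod_i (if i \in L then (m i == (u i)%:Z)%:R - (m i == (u i)%:Z - 1)%:R
           else (m i == (u i)%:Z)%:R).

Definition fixed_below p (u : vec p) (L : {set 'I_p}) (n : vec p) : bool :=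
  [forall i, (n i <= u i)%N && ((i \in L) ==> (n i == u i))].

Lemma fixed_below_leqv p (u : vec p) L n : fixed_below u L n -> leqv n u.
Proof. by move/forallP => un; apply/leqvP => k; case/andP: (un k). Qed.

Lemma sum_boxcoef_fixed_below p (P : {fset vec p}) (u : vec p) (L : {set 'I_p}) m :
  u \in box P -> (forall l, l \in L -> (0 < u l)%N) ->
  \sum_(n <- box P) (fixed_below u L n)%:R * boxcoef n m = stalcoef u L m.
Proof.
rewrite mem_box => /forallP u_le L_gt0.
rewrite (eq_bigr (fun n : vec p => \prod_i
   (((n i <= u i)%N && ((i \in L) ==> (n i == u i)))%:R * fcoef (n i) (m i)))); last first.
  by move=> n _; rewrite big_split /= prodr_bool.
rewrite (sum_box_prod P (fun i k =>
   ((k <= u i)%N && ((i \in L) ==> (k == u i)))%:R * fcoef k (m i))).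
apply: eq_bigr => i _; have ui_lt : (u i < (rk P).+1)%N by rewrite ltnS.
case: ifP => iL /=; last by under eq_bigr do rewrite andbT; rewrite sum_fcoef_leq.
rewrite (eq_bigr (fun k : 'I_(rk P).+1 => if k == Ordinal ui_lt then fcoef k (m i) else 0)).
  by rewrite -big_mkcond big_pred1_eq /fcoef L_gt0 //= predn_int ?L_gt0.
move=> k _; have -> : ((k <= u i)%N && (k == u i :> nat)) = (k == Ordinal ui_lt).
  by apply/andP/eqP => [[_ /eqP ki]|->]; [apply: val_inj | split].
by case: eqP; rewrite ?mul1r ?mul0r.
Qed.



Section Telescoping.
Variables (p : nat) (s : {perm 'I_p}) (P : {fset vec p}).
Hypotheses (P_homog : homogeneous P) (P_mconv : Mconvex P).
Implicit Types (Q : {fset vec p}) (u v w n : vec p).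
Local Open Scope fset_scope.

Definition lex_initial Q :=
  {subset Q <= P} /\ forall v w, v \in P -> w \in Q -> lexlt s v w -> v \in Q.

Section LexMax.
Variables (Q : {fset vec p}) (u : vec p).
Hypotheses (Q_init : lex_initial Q) (uQ : u \in Q).
Hypothesis u_max : forall v, v \in Q -> ~~ lexlt s u v.

Lemma lex_initial_preds : preds s P u = Q `\ u.
Proof.
apply/fsetP => v; rewrite mem_preds in_fsetD1.
apply/andP/andP => [[vP vu]|[vNu vQ]].
  split; last exact: Q_init.2 vu.
  by apply: contraTneq vu => ->; apply: lexlt_irr.
split; first exact: Q_init.1.
by have /orP [//|uv] := lexlt_total s vNu; have := u_max vQ; rewrite uv.
Qed.

Lemma lex_initial_fsetD1 : lex_initial (Q `\ u).
Proof.
split=> [v /fsetD1P [_ /Q_init.1] //|v w vP /fsetD1P [_ wQ] vw].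
rewrite in_fsetD1 (Q_init.2 v w vP wQ vw) andbT.
by apply: contraTneq vw => ->; apply: u_max.
Qed.

End LexMax.

Lemma fixed_below_preds u n : u \in P -> leqv n u ->
  fixed_below u (Lset u (preds s P u)) n = ~~ inI (preds s P u) n.
Proof.
move=> uP nu; rewrite (inI_preds s P_mconv uP nu) negb_exists.
apply: eq_forallb => l; rewrite (leqvP _ _ nu l) negb_and -leqNgt implybE /=.
by rewrite eqn_leq (leqvP _ _ nu l).
Qed.

Lemma sum_stalcoef_lex_initial Q m : lex_initial Q ->
  \sum_(u <- Q) stalcoef u (Lset u (preds s P u)) m =
  \sum_(n <- box P) (inI Q n)%:R * boxcoef n m.
Proof.
elim: {Q}_.+1 {-2}Q (ltnSn #|` Q|) => // N IHN Q QN Q_init.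
have [Q0|QN0] := eqVneq (enum_fset Q) [::].
  by rewrite /inI Q0 big_nil big1 // => n _; rewrite mul0r.
have [u uQ u_max] := lexlt_max s QN0.
have uP : u \in P := Q_init.1 u uQ.
have QuN : (#|` Q `\ u| < N)%N by move: QN; rewrite (cardfsD1 u Q) uQ.
rewrite (big_fsetD1 u uQ) /= IHN //; last exact: lex_initial_fsetD1.
rewrite -(@sum_boxcoef_fixed_below _ P u (Lset u (preds s P u)) m); first last.
- by move=> l; apply: Lset_preds_gt0.
- by rewrite mem_box; apply/forallP => k; apply: leq_rk.
rewrite -big_split /=; apply: eq_bigr => n _; rewrite -mulrDl (inI_fsetD1 _ uQ).
have [nu|nNu] := boolP (leqv n u); last first.
  by rewrite orbF (contraNF (@fixed_below_leqv _ _ _ _) nNu) add0r.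
by rewrite orbT -(lex_initial_preds Q_init uQ u_max) fixed_below_preds //; case: inI.
Qed.

End Telescoping.

Section StalactiteCoefficients.
Variables (p : nat) (u : vec p).
Implicit Types (L J : {set 'I_p}) (m : zvec p).

Lemma stalcoef_eq0 (V : {fset vec p}) m : ~~ inSt u V m -> stalcoef u (Lset u V) m = 0.
Proof.
move=> mNS; apply: contraNeq mNS; rewrite /stalcoef => /prodf_neq0 stal_neq0.
apply/existsP; exists [set k | m k != (u k)%:Z]; apply/andP; split.
  apply/subsetP => k; rewrite inE; have := stal_neq0 k isT.
  by case: (k \in Lset u V) => //; case: (m k =P (u k)%:Z).
apply/eqP/ffunP => k; rewrite !ffunE inE; have := stal_neq0 k isT.
case: (m k =P (u k)%:Z) => [->|mk] /=; first by rewrite subr0.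
by case: (k \in Lset u V); case: (m k =P (u k)%:Z - 1); rewrite ?subr0 ?negbK ?eqxx.
Qed.

Lemma stalcoef_subJ L J : J \subset L ->
  stalcoef u L [ffun k => toZ u k - evJ J k] = (-1) ^+ #|J|.
Proof.
move=> /subsetP JL; rewrite /stalcoef (eq_bigr (fun k => if k \in J then -1 else 1)).
  by rewrite -big_mkcond prodr_const.
move=> k _; rewrite !ffunE; case kJ: (k \in J); last first.
  rewrite subr0 eqxx; case: (k \in L) => //.
  by have -> : ((u k)%:Z == (u k)%:Z - 1) = false by apply/negbTE; lia.
rewrite JL //; have -> : ((u k)%:Z - 1 == (u k)%:Z) = false by apply/negbTE; lia.
by rewrite eqxx.
Qed.

Definition subJ J : vec p := [ffun k => (u k - (k \in J))%N].

Section Support.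
Variable J : {set 'I_p}.
Hypothesis J_gt0 : forall k, k \in J -> (0 < u k)%N.

Lemma toZ_subJ : toZ (subJ J) = [ffun k => toZ u k - evJ J k].
Proof.
apply/ffunP => k; rewrite !ffunE; case: ifP => kJ /=; last by rewrite subn0 subr0.
by rewrite subn1 predn_int ?J_gt0.
Qed.

Lemma vsize_subJ : vsize u = (vsize (subJ J) + #|J|)%N.
Proof.
rewrite /vsize -sum1_card [X in (_ + X)%N]big_mkcond -big_split /=.
apply: eq_bigr => k _; rewrite ffunE; case: ifP => kJ /=; last by rewrite subn0 addn0.
by rewrite subn1 addn1 prednK ?J_gt0.
Qed.

End Support.

End StalactiteCoefficients.

Section StalactitePolynomial.
Variables (p : nat) (s : {perm 'I_p}) (P : {fset vec p}).
Hypothesis P_homog : homogeneous P.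
Implicit Types (m : zvec p) (u n : vec p).

Lemma sum_stalactite u m : u \in P ->
  \sum_(n <- IP P) (toZ n == m)%:R *
    ((-1) ^+ (rk P - vsize n) * (inSt u (preds s P u) (toZ n))%:R) =
  stalcoef u (Lset u (preds s P u)) m.
Proof.
move=> uP; have [mS|mNS] := boolP (inSt u (preds s P u) m); last first.
  rewrite stalcoef_eq0 // big1 // => n _.
  by case: eqP => [->|]; rewrite ?(negbTE mNS) ?mulr0 ?mul0r.
have /existsP [J /andP [JL /eqP mE]] := mS.
have J_gt0 k : k \in J -> (0 < u k)%N.
  by move/(subsetP JL); apply: Lset_preds_gt0.
have uJI : subJ u J \in IP P.
  by rewrite mem_IP //; apply/inIP; exists u => //; apply/leqvP => k; rewrite ffunE leq_subr.
have uJE : toZ (subJ u J) = m by rewrite toZ_subJ.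
rewrite -uJE; under eq_bigr do rewrite (inj_eq (@toZ_inj p)).
rewrite sumr_pred1_seq ?uniq_IP // uJI mul1r uJE mS mulr1 mE stalcoef_subJ //.
by rewrite (rk_vsize P_homog uP) (vsize_subJ J_gt0) addKn.
Qed.

Lemma lcoef_Stal m :
  lcoef (Stal s P) m = \sum_(u <- P) stalcoef u (Lset u (preds s P u)) m.
Proof.
rewrite lcoef_lsum.
under eq_bigr do rewrite lcoef_lterm /cstal natr_count !big_distrr /=.
rewrite exchange_big /= big_seq [RHS]big_seq; apply: eq_bigr => u uP.
by rewrite -sum_stalactite //; apply: eq_bigr => n _; rewrite mulrA.
Qed.

Hypothesis P_mconv : Mconvex P.

Lemma Stal_Box : lcoef (Stal s P) =1 lcoef (Box P).
Proof.
move=> m; rewrite lcoef_Stal lcoef_Box (sum_stalcoef_lex_initial P_homog P_mconv).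
  rewrite [RHS]big_filter [RHS]big_mkcond; apply: eq_bigr => n _.
  by case: inI; rewrite ?mul1r ?mul0r.
by split.
Qed.

End StalactitePolynomial.

Section CavePolynomial.
Variables (p : nat) (P : {fset vec p}).
Implicit Types (m : zvec p) (u n : vec p).

Lemma lexlt1_shiftn u i j :
  (0 < u i)%N -> i != j -> lexlt 1 (shiftn u i j) u = (i < j)%N.
Proof.
move=> ui_gt0 ij; case: ltngtP => [lt_ij|lt_ji|/val_inj eq_ij]; last first.
- by rewrite eq_ij eqxx in ij.
- apply/negbTE/negP => shu; have /negP := lexlt_irr 1 u; apply; apply: lexlt_trans shu.
  apply/existsP; exists j; rewrite !perm1 ffunE eqxx eq_sym (negbTE ij).
  rewrite addn1 subn0 ltnSn andbT; apply/forallP => l; apply/implyP => lj.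
  have li : (l < i)%N := ltn_trans lj lt_ji.
  rewrite !perm1 ffunE (ltn_eqF lj : (l == j) = false).
  by rewrite (ltn_eqF li : (l == i) = false) addn0 subn0.
have := @lexlt_shiftn _ 1 u i j; rewrite !perm1; apply=> // l li.
by rewrite perm1; apply: contraTneq lt_ij => <-; rewrite -leqNgt ltnW.
Qed.

Lemma Lset_preds1 u i :
  (i \in Lset u (preds 1 P u)) =
  [exists j : 'I_p, (i < j)%N && inZ P (shift (toZ u) i j)].
Proof.
rewrite inE; apply: eq_existsb => j; rewrite !inZ_shift mem_preds.
have [<-|ij] := eqVneq i j; first by rewrite shiftnn (negbTE (lexlt_irr _ _)) ltnn !andbF.
by case: (ltnP 0 (u i)) => [ui_gt0|] /=; rewrite ?andbF // lexlt1_shiftn // andbC.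
Qed.

Lemma lcoef_cave_prod n m :
  lcoef (lprod [seq i : 'I_p <- enum 'I_p | (i.+1 < p)%N]
           (fun i => [:: (1, zzero p); (- cmax P n i, [ffun k => - ev i k])])) (m - toZ n)
  = stalcoef n (Lset n (preds 1 P n)) m.
Proof.
rewrite lcoef_lprod ?filter_uniq -?enumT ?enum_uniq //; last first.
  by move=> i x; rewrite !inE => /orP [] /eqP -> k ki; rewrite !ffunE ?(negbTE ki) ?oppr0.
apply: eq_bigr => i _; rewrite mem_filter mem_enum andbT !ffunE.
have -> : (m i - (n i)%:Z == 0) = (m i == (n i)%:Z) by rewrite subr_eq0.
case: ifP => ip; last first.
  rewrite Lset_preds1; case: existsP => // -[j /andP [ij _]].
  by move: (leq_ltn_trans ij (ltn_ord j)); rewrite ip.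
rewrite !lcoef_cons lcoef_nil zzeroE -(zkev0 i) zkevN1 !(inj_eq (@zkev_inj _ i)) /cmax.
rewrite -Lset_preds1 addr0 mulr1 eq_sym [_ == m i - _]eq_sym subr_eq0.
have -> : (m i - (n i)%:Z == -1) = (m i == (n i)%:Z - 1) by apply/eqP/eqP; lia.
by case: (i \in _); rewrite /= ?mulrN1 ?oppr0 ?mulr0 ?addr0.
Qed.

Hypothesis P_homog : homogeneous P.

Lemma lcoef_Cave m : lcoef (Cave P) m = \sum_(u <- P) stalcoef u (Lset u (preds 1 P u)) m.
Proof.
rewrite lcoef_lsum.
under eq_bigr => n _.
  rewrite lcoef_lmul_lterml lcoef_lmul_ltermr mul1r zzeroE subr0 /ind inZ_toZ lcoef_cave_prod.
  rewrite (_ : _ * _ = if n \in P then stalcoef n (Lset n (preds 1 P n)) m else 0).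
    over.
  by case: (n \in P); rewrite ?mul1r ?mul0r.
rewrite -big_mkcond -big_filter; apply: perm_big.
apply: uniq_perm; rewrite ?filter_uniq ?uniq_box ?fset_uniq // => n.
rewrite !mem_filter andb_idr // => nP.
by rewrite (rk_vsize P_homog nP) eqxx mem_box; apply/forallP => k; apply: leq_rk.
Qed.

Lemma Cave_Stal1 : lcoef (Cave P) =1 lcoef (Stal 1 P).
Proof. by move=> m; rewrite lcoef_Cave lcoef_Stal. Qed.

End CavePolynomial.

Unset Implicit Arguments.

Theorem theorem1p3 (p : nat) (P : {fset vec p}) (s : {perm 'I_p}) :
  polymatroid P ->
  lcoef (Cave P) =1 lcoef (Stal s P) /\
  lcoef (Stal s P) =1 lcoef (Box P) /\
  lcoef (Box P) =1 lcoef (Mob P).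
Proof.
case=> P_homog P_mconv; split; [|split].
- by move=> m; rewrite (Cave_Stal1 P_homog) !(Stal_Box _ P_homog P_mconv).
- exact: Stal_Box.
- by move=> m; rewrite lcoef_Box lcoef_Mob.
Qed.
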